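(* Let a hinge $\Diamond_{ij;kl}$ (edge $e_{ij}$ with faces $f_{ijk},f_{ijl}$) carry radii $p,q,r,s>0$ at $v_k,v_i,v_l,v_j$ and inversive distances $a,b,c,d,e>1$ at $e_{ki},e_{il},e_{lj},e_{jk},e_{ij}$, and let the edge lengths be $u=\sqrt{p^2+q^2+2apq}$, $v=\sqrt{q^2+r^2+2bqr}$, $w=\sqrt{r^2+s^2+2crs}$, $x=\sqrt{s^2+p^2+2dsp}$, $y=\sqrt{q^2+s^2+2eqs}$. Suppose the faces $f_{ijk}$ (sides $u,x,y$) and $f_{ijl}$ (sides $v,w,y$) satisfy the triangle inequalities, develop the hinge into $\mathbb{E}^2$, and let $z=d_{\mathbb{E}}(v_k,v_l)$. Let $F=\frac{z^2-p^2-r^2}{2pr}$ and $f=\frac{ab+cd+ace+bde+\sqrt{\Delta_{ade}}\sqrt{\Delta_{bce}}}{e^2-1}$ with $\Delta_{xyz}=x^2+y^2+z^2+2xyz-1$, regarded as functions of the nine variables $p,q,r,s,a,b,c,d,e$. At any point where \[\frac{\sqrt{\Delta_{bce}}}{p}+\frac{\sqrt{\Delta_{ade}}}{r}=\frac{\sqrt{\Delta_{cdf}}}{q}+\frac{\sqrt{\Delta_{abf}}}{s}\] holds, we have $dF=df$. *)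

From Stdlib Require Import Reals.
From Coquelicot Require Import Coquelicot.
Open Scope R_scope.

Definition Delta (x y z : R) : R := x^2 + y^2 + z^2 + 2*x*y*z - 1.

Definition ivlen (r1 r2 I : R) : R := sqrt (r1^2 + r2^2 + 2*I*r1*r2).

Definition len_u p q (r s a b c d e : R) := ivlen p q a.
Definition len_v (p : R) q r (s a : R) b (c d e : R) := ivlen q r b.
Definition len_w (p q : R) r s (a b : R) c (d e : R) := ivlen r s c.
Definition len_x p (q r : R) s (a b c : R) d (e : R) := ivlen s p d.
Definition len_y (p : R) q (r : R) s (a b c d : R) e := ivlen q s e.

(* Development of the hinge into E^2: v_i = (0,0), v_j = (y,0),
   v_k = (xk, yk) with yk > 0 (|v_k v_i| = u, |v_k v_j| = x),
   v_l = (xl, -yl) with yl > 0 (|v_l v_i| = v, |v_l v_j| = w),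
   i.e. the two faces lie on opposite sides of the common edge e_ij. *)
Definition hinge_z (p q r s a b c d e : R) : R :=
  let u := len_u p q r s a b c d e in
  let v := len_v p q r s a b c d e in
  let w := len_w p q r s a b c d e in
  let x := len_x p q r s a b c d e in
  let y := len_y p q r s a b c d e in
  let xk := (u^2 + y^2 - x^2) / (2*y) in
  let yk := sqrt (u^2 - xk^2) in
  let xl := (v^2 + y^2 - w^2) / (2*y) in
  let yl := sqrt (v^2 - xl^2) in
  sqrt ((xk - xl)^2 + (yk - (- yl))^2).

Definition F_hinge (p q r s a b c d e : R) : R :=
  ((hinge_z p q r s a b c d e)^2 - p^2 - r^2) / (2*p*r).

Definition f_hinge (p q r s a b c d e : R) : R :=
  (a*b + c*d + a*c*e + b*d*e + sqrt (Delta a d e) * sqrt (Delta b c e))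
  / (e^2 - 1).

Definition hinge_admissible (p q r s a b c d e : R) : Prop :=
  let u := len_u p q r s a b c d e in
  let v := len_v p q r s a b c d e in
  let w := len_w p q r s a b c d e in
  let x := len_x p q r s a b c d e in
  let y := len_y p q r s a b c d e in
  0 < p /\ 0 < q /\ 0 < r /\ 0 < s /\
  1 < a /\ 1 < b /\ 1 < c /\ 1 < d /\ 1 < e /\
  u < x + y /\ x < u + y /\ y < u + x /\
  v < w + y /\ w < v + y /\ y < v + w.

Definition hinge_condition (p q r s a b c d e : R) : Prop :=
  let fv := f_hinge p q r s a b c d e in
  sqrt (Delta b c e) / p + sqrt (Delta a d e) / r
  = sqrt (Delta c d fv) / q + sqrt (Delta a b fv) / s.

(* Let Q(F) be the determinant of the Gram matrix of inversive distances of the circles at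
   v_k, v_i, v_l, v_j, with F in place of I(v_k, v_l); it is a quadratic in F whose larger
   root is f.  Four circles in the plane have Q <= 0, since their Gram matrix is M B M^T with
   det B = -1/4; so Q(F) <= 0 at every admissible hinge.  Under the critical condition the
   kernel of the Gram matrix at f is an affine relation v_l = lk v_k + li v_i + lj v_j with
   lk < 0, which forces F = f.  Along any line through the point, t |-> Q_t(F_t) therefore
   attains its maximum 0 at t = 0, while Q_t(F_t) = (F_t - f_t) K_t with
   K_0 = 2 sqrt(Delta_ade) sqrt(Delta_bce) > 0; hence F' = f'. *)

From Pilot Require Import Defs.
From Stdlib Require Import Reals Lra Psatz.
From Coquelicot Require Import Coquelicot.
Open Scope R_scope.

(* Proves [L = R] once [L - R = c] holds as a polynomial identity, where [c]
   is a combination of hypotheses [h = 0] whose left-hand sides occur verbatim in [c]. *)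
Ltac linear_combination c :=
  match goal with |- ?L = ?R =>
    let Z := fresh in assert (Z : L - R = c) by ring;
    repeat match goal with H : _ = 0 |- _ => rewrite H in Z end;
    lra end.

Definition ivlen2 (r1 r2 I : R) : R := r1^2 + r2^2 + 2*I*r1*r2.

Lemma ivlen2C r1 r2 I : ivlen2 r1 r2 I = ivlen2 r2 r1 I.
Proof. unfold ivlen2; ring. Qed.

Lemma ivlen2_gt0 r1 r2 I : 0 < r1 -> 0 < r2 -> 0 <= I -> 0 < ivlen2 r1 r2 I.
Proof.
  intros H1 H2 HI; unfold ivlen2.
  assert (0 <= I*r1*r2) by (apply Rmult_le_pos; [apply Rmult_le_pos|]; lra).
  nra.
Qed.

Lemma ivlen2_inj r1 r2 I J : r1 <> 0 -> r2 <> 0 -> ivlen2 r1 r2 I = ivlen2 r1 r2 J -> I = J.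
Proof.
  unfold ivlen2; intros H1 H2 E.
  apply (Rmult_eq_reg_l (2*r1*r2)); [lra|].
  apply Rmult_integral_contrapositive; split; [|exact H2].
  apply Rmult_integral_contrapositive; split; lra.
Qed.

Lemma ivlen_sqr r1 r2 I : 0 < r1 -> 0 < r2 -> 0 <= I -> ivlen r1 r2 I ^ 2 = ivlen2 r1 r2 I.
Proof. intros; apply pow2_sqrt, Rlt_le, ivlen2_gt0; assumption. Qed.

Lemma ivlen_gt0 r1 r2 I : 0 < r1 -> 0 < r2 -> 0 <= I -> 0 < ivlen r1 r2 I.
Proof. intros; apply sqrt_lt_R0, ivlen2_gt0; assumption. Qed.

Lemma Delta_gt0 x y z : 1 < x -> 0 <= y -> 0 <= z -> 0 < Defs.Delta x y z.
Proof.
  intros; unfold Defs.Delta.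
  assert (0 <= x*y*z) by (apply Rmult_le_pos; [apply Rmult_le_pos|]; lra).
  nra.
Qed.

Definition det3 a11 a12 a13 a21 a22 a23 a31 a32 a33 : R :=
  a11*(a22*a33-a23*a32) - a12*(a21*a33-a23*a31) + a13*(a21*a32-a22*a31).

Definition det4 m11 m12 m13 m14 m21 m22 m23 m24 m31 m32 m33 m34 m41 m42 m43 m44 : R :=
  m11 * det3 m22 m23 m24 m32 m33 m34 m42 m43 m44
  - m12 * det3 m21 m23 m24 m31 m33 m34 m41 m43 m44
  + m13 * det3 m21 m22 m24 m31 m32 m34 m41 m42 m44
  - m14 * det3 m21 m22 m23 m31 m32 m33 m41 m42 m43.

(* Determinant of the Gram matrix of the circles at v_k, v_i, v_l, v_j (off-diagonal
   entries minus the inversive distances), with [F] in place of I(v_k, v_l). *)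
Definition hinge_gram (F a b c d e : R) : R :=
  det4 1 (-a) (-F) (-d) (-a) 1 (-b) (-e) (-F) (-b) 1 (-c) (-d) (-e) (-c) 1.

Definition hinge_N (a b c d e : R) : R := a*b + c*d + a*c*e + b*d*e.

Lemma hinge_gram_square F a b c d e :
  (e^2 - 1) * hinge_gram F a b c d e
  = ((e^2 - 1)*F - hinge_N a b c d e)^2 - Defs.Delta a d e * Defs.Delta b c e.
Proof. unfold hinge_gram, hinge_N, det4, det3, Defs.Delta; ring. Qed.

Lemma hinge_gram_sub F G a b c d e :
  hinge_gram F a b c d e - hinge_gram G a b c d e
  = (F - G) * ((e^2 - 1)*(F + G) - 2*hinge_N a b c d e).
Proof. unfold hinge_gram, hinge_N, det4, det3; ring. Qed.

Lemma f_hinge_gap p q r s a b c d e : 1 < e ->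
  (e^2 - 1) * f_hinge p q r s a b c d e - hinge_N a b c d e
  = sqrt (Defs.Delta a d e) * sqrt (Defs.Delta b c e).
Proof. intro He; unfold f_hinge, hinge_N; field; nra. Qed.

Lemma hinge_gram_f_hinge p q r s a b c d e :
  1 < a -> 1 < b -> 0 <= c -> 0 <= d -> 1 < e ->
  hinge_gram (f_hinge p q r s a b c d e) a b c d e = 0.
Proof.
  intros Ha Hb Hc Hd He.
  apply (Rmult_eq_reg_l (e^2 - 1)); [|nra].
  rewrite hinge_gram_square, f_hinge_gap, Rmult_0_r by lra.
  rewrite Rpow_mult_distr, !pow2_sqrt; [ring | |];
    apply Rlt_le, Delta_gt0; lra.
Qed.

Definition dist2 (x1 y1 x2 y2 : R) : R := (x1 - x2)^2 + (y1 - y2)^2.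

(* The circle of center (x, y) and radius r lifts to (x, y, x^2 + y^2 - r^2, 1);
   in these coordinates [circle_form] is the bilinear form of matrix
   [[1,0,0,0], [0,1,0,0], [0,0,0,-1/2], [0,0,-1/2,0]], of determinant -1/4. *)
Definition circle_form (x1 y1 r1 x2 y2 r2 : R) : R :=
  x1*x2 + y1*y2 - ((x1^2 + y1^2 - r1^2) + (x2^2 + y2^2 - r2^2)) / 2.

Lemma circle_formC x1 y1 r1 x2 y2 r2 :
  circle_form x1 y1 r1 x2 y2 r2 = circle_form x2 y2 r2 x1 y1 r1.
Proof. unfold circle_form; field. Qed.

Lemma circle_form_diag x y r : circle_form x y r x y r = r^2.
Proof. unfold circle_form; field. Qed.

Lemma circle_form_ivlen2 x1 y1 r1 x2 y2 r2 I :
  dist2 x1 y1 x2 y2 = ivlen2 r1 r2 I -> circle_form x1 y1 r1 x2 y2 r2 = - (r1*r2*I).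
Proof. unfold dist2, ivlen2, circle_form; intro E. lra. Qed.

Lemma det4_circle_form x1 y1 r1 x2 y2 r2 x3 y3 r3 x4 y4 r4 :
  let z1 := x1^2 + y1^2 - r1^2 in let z2 := x2^2 + y2^2 - r2^2 in
  let z3 := x3^2 + y3^2 - r3^2 in let z4 := x4^2 + y4^2 - r4^2 in
  det4 (circle_form x1 y1 r1 x1 y1 r1) (circle_form x1 y1 r1 x2 y2 r2)
       (circle_form x1 y1 r1 x3 y3 r3) (circle_form x1 y1 r1 x4 y4 r4)
       (circle_form x2 y2 r2 x1 y1 r1) (circle_form x2 y2 r2 x2 y2 r2)
       (circle_form x2 y2 r2 x3 y3 r3) (circle_form x2 y2 r2 x4 y4 r4)
       (circle_form x3 y3 r3 x1 y1 r1) (circle_form x3 y3 r3 x2 y2 r2)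
       (circle_form x3 y3 r3 x3 y3 r3) (circle_form x3 y3 r3 x4 y4 r4)
       (circle_form x4 y4 r4 x1 y1 r1) (circle_form x4 y4 r4 x2 y2 r2)
       (circle_form x4 y4 r4 x3 y3 r3) (circle_form x4 y4 r4 x4 y4 r4)
  = - (det4 x1 y1 z1 1 x2 y2 z2 1 x3 y3 z3 1 x4 y4 z4 1)^2 / 4.
Proof. unfold circle_form, det4, det3; field. Qed.

Lemma inversive_gram_le0 x1 y1 r1 x2 y2 r2 x3 y3 r3 x4 y4 r4 I12 I13 I14 I23 I24 I34 :
  r1 * r2 * r3 * r4 <> 0 ->
  dist2 x1 y1 x2 y2 = ivlen2 r1 r2 I12 -> dist2 x1 y1 x3 y3 = ivlen2 r1 r3 I13 ->
  dist2 x1 y1 x4 y4 = ivlen2 r1 r4 I14 -> dist2 x2 y2 x3 y3 = ivlen2 r2 r3 I23 ->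
  dist2 x2 y2 x4 y4 = ivlen2 r2 r4 I24 -> dist2 x3 y3 x4 y4 = ivlen2 r3 r4 I34 ->
  det4 1 (-I12) (-I13) (-I14) (-I12) 1 (-I23) (-I24)
       (-I13) (-I23) 1 (-I34) (-I14) (-I24) (-I34) 1 <= 0.
Proof.
  intros Hr H12 H13 H14 H23 H24 H34.
  assert (Hgram := det4_circle_form x1 y1 r1 x2 y2 r2 x3 y3 r3 x4 y4 r4); cbv zeta in Hgram.
  rewrite !circle_form_diag,
    (circle_formC x2 y2 r2 x1), (circle_formC x3 y3 r3 x1), (circle_formC x4 y4 r4 x1),
    (circle_formC x3 y3 r3 x2), (circle_formC x4 y4 r4 x2), (circle_formC x4 y4 r4 x3),
    (circle_form_ivlen2 _ _ _ _ _ _ _ H12), (circle_form_ivlen2 _ _ _ _ _ _ _ H13),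
    (circle_form_ivlen2 _ _ _ _ _ _ _ H14), (circle_form_ivlen2 _ _ _ _ _ _ _ H23),
    (circle_form_ivlen2 _ _ _ _ _ _ _ H24), (circle_form_ivlen2 _ _ _ _ _ _ _ H34) in Hgram.
  set (W := det4 x1 y1 _ 1 _ _ _ _ _ _ _ _ _ _ _ _) in Hgram.
  set (G := det4 1 _ _ _ _ _ _ _ _ _ _ _ _ _ _ _).
  assert (E : (r1*r2*r3*r4)^2 * G = - W^2 / 4) by (rewrite <- Hgram; unfold G, det4, det3; ring).
  assert (0 < (r1*r2*r3*r4)^2) by (apply pow2_gt_0; exact Hr).
  nra.
Qed.

Lemma dist2C x1 y1 x2 y2 : dist2 x1 y1 x2 y2 = dist2 x2 y2 x1 y1.
Proof. unfold dist2; ring. Qed.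

Lemma dist2_ge0 x1 y1 x2 y2 : 0 <= dist2 x1 y1 x2 y2.
Proof. unfold dist2; apply Rplus_le_le_0_compat; apply pow2_ge_0. Qed.

(* Abscissa of the apex of the triangle with base (0,0)-(y,0) and sides u at (0,0),
   x at (y,0); the squared height of the apex is [u^2 - foot u x y ^2]. *)
Definition foot (u x y : R) : R := (u^2 + y^2 - x^2) / (2*y).

Lemma apex_height2_gt0 u x y : 0 < u -> 0 < x -> 0 < y ->
  u < x + y -> x < u + y -> y < u + x -> 0 < u^2 - foot u x y ^2.
Proof.
  intros Hu Hx Hy T1 T2 T3.
  assert (Heron : u^2 - foot u x y ^2
                  = (x - u + y) * (x + u - y) * ((u + y - x) * (u + y + x)) / (4 * y^2))
    by (unfold foot; field; lra).
  rewrite Heron; apply Rdiv_lt_0_compat; [|nra].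
  repeat apply Rmult_lt_0_compat; lra.
Qed.

Lemma apex_dist2 u x y h : 0 < y -> h^2 = u^2 - foot u x y ^2 ->
  dist2 (foot u x y) h 0 0 = u^2 /\ dist2 (foot u x y) h y 0 = x^2.
Proof.
  intros Hy Hh.
  assert (Hfoot : 2 * y * foot u x y = u^2 + y^2 - x^2) by (unfold foot; field; lra).
  unfold dist2; split; nra.
Qed.

Lemma F_hinge_apex p q r s a b c d e :
  let u := len_u p q r s a b c d e in let v := len_v p q r s a b c d e in
  let w := len_w p q r s a b c d e in let x := len_x p q r s a b c d e in
  let y := len_y p q r s a b c d e in
  F_hinge p q r s a b c d e
  = (dist2 (foot u x y) (sqrt (u^2 - foot u x y ^2))
           (foot v w y) (- sqrt (v^2 - foot v w y ^2)) - p^2 - r^2) / (2*p*r).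
Proof.
  intros; unfold F_hinge.
  change (hinge_z p q r s a b c d e) with (sqrt (dist2 (foot u x y) (sqrt (u^2 - foot u x y ^2))
           (foot v w y) (- sqrt (v^2 - foot v w y ^2)))).
  rewrite pow2_sqrt; [reflexivity | apply dist2_ge0].
Qed.

Lemma hinge_admissible_apex p q r s a b c d e : hinge_admissible p q r s a b c d e ->
  let u := len_u p q r s a b c d e in let v := len_v p q r s a b c d e in
  let w := len_w p q r s a b c d e in let x := len_x p q r s a b c d e in
  let y := len_y p q r s a b c d e in
  0 < y /\ 0 < u^2 - foot u x y ^2 /\ 0 < v^2 - foot v w y ^2.
Proof.
  intro H; unfold hinge_admissible in H; cbv zeta in *.
  destruct H as (Hp & Hq & Hr & Hs & Ha & Hb & Hc & Hd & He & T1 & T2 & T3 & T4 & T5 & T6).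
  assert (Hu := ivlen_gt0 p q a Hp Hq ltac:(lra)).
  assert (Hv := ivlen_gt0 q r b Hq Hr ltac:(lra)).
  assert (Hw := ivlen_gt0 r s c Hr Hs ltac:(lra)).
  assert (Hx := ivlen_gt0 s p d Hs Hp ltac:(lra)).
  assert (Hy := ivlen_gt0 q s e Hq Hs ltac:(lra)).
  repeat split; [exact Hy | |]; apply apex_height2_gt0; assumption.
Qed.

Lemma hinge_development p q r s a b c d e : hinge_admissible p q r s a b c d e ->
  exists xk yk xl yl y, 0 < y /\ 0 < yk /\ 0 < yl /\
    dist2 xk yk 0 0 = ivlen2 p q a /\
    dist2 xk yk xl (-yl) = ivlen2 p r (F_hinge p q r s a b c d e) /\
    dist2 xk yk y 0 = ivlen2 p s d /\ dist2 0 0 xl (-yl) = ivlen2 q r b /\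
    dist2 0 0 y 0 = ivlen2 q s e /\ dist2 xl (-yl) y 0 = ivlen2 r s c.
Proof.
  intro H.
  destruct (hinge_admissible_apex p q r s a b c d e H) as (Hy0 & Hk & Hl).
  assert (HF := F_hinge_apex p q r s a b c d e).
  destruct H as (Hp & Hq & Hr & Hs & Ha & Hb & Hc & Hd & He & _).
  cbv zeta in *; unfold len_u, len_v, len_w, len_x, len_y in *.
  assert (Hu := ivlen_sqr p q a Hp Hq ltac:(lra)).
  assert (Hv := ivlen_sqr q r b Hq Hr ltac:(lra)).
  assert (Hw := ivlen_sqr r s c Hr Hs ltac:(lra)).
  assert (Hx := ivlen_sqr s p d Hs Hp ltac:(lra)).
  assert (Hy := ivlen_sqr q s e Hq Hs ltac:(lra)).
  set (u := ivlen p q a) in *; set (v := ivlen q r b) in *; set (w := ivlen r s c) in *;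
  set (x := ivlen s p d) in *; set (y := ivlen q s e) in *.
  set (yk := sqrt (u^2 - foot u x y ^2)) in *; set (yl := sqrt (v^2 - foot v w y ^2)) in *.
  assert (Hyk : yk^2 = u^2 - foot u x y ^2) by (apply pow2_sqrt; lra).
  assert (Hyl : (-yl)^2 = v^2 - foot v w y ^2)
    by (replace ((-yl)^2) with (yl^2) by ring; apply pow2_sqrt; lra).
  destruct (apex_dist2 u x y yk Hy0 Hyk) as [Dki Dkj].
  destruct (apex_dist2 v w y (-yl) Hy0 Hyl) as [Dil Dlj].
  exists (foot u x y), yk, (foot v w y), yl, y.
  repeat split.
  - exact Hy0.
  - apply sqrt_lt_R0; exact Hk.
  - apply sqrt_lt_R0; exact Hl.
  - rewrite Dki; exact Hu.
  - rewrite HF; unfold ivlen2; field; lra.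
  - rewrite Dkj, Hx; apply ivlen2C.
  - rewrite dist2C, Dil; exact Hv.
  - rewrite <- Hy; unfold dist2; ring.
  - rewrite Dlj; exact Hw.
Qed.

Lemma hinge_gram_F_hinge_le0 p q r s a b c d e : hinge_admissible p q r s a b c d e ->
  hinge_gram (F_hinge p q r s a b c d e) a b c d e <= 0.
Proof.
  intro H.
  destruct (hinge_development p q r s a b c d e H)
    as (xk & yk & xl & yl & y & _ & _ & _ & Dki & Dkl & Dkj & Dil & Dij & Dlj).
  destruct H as (Hp & Hq & Hr & Hs & _).
  apply (inversive_gram_le0 xk yk p 0 0 q xl (-yl) r y 0 s); try assumption.
  repeat (apply Rmult_integral_contrapositive; split); lra.
Qed.

Lemma dist2_affine_comb la lb lc xa ya xb yb xc yc X Y : la + lb + lc = 1 ->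
  dist2 (la*xa + lb*xb + lc*xc) (la*ya + lb*yb + lc*yc) X Y
  = la * dist2 xa ya X Y + lb * dist2 xb yb X Y + lc * dist2 xc yc X Y
    - (la*lb * dist2 xa ya xb yb + la*lc * dist2 xa ya xc yc + lb*lc * dist2 xb yb xc yc).
Proof. intro H; replace lc with (1 - la - lb) by lra; unfold dist2; ring. Qed.

Lemma dist2_axis_inj X1 Y1 X2 Y2 y : y <> 0 ->
  dist2 X1 Y1 0 0 = dist2 X2 Y2 0 0 -> dist2 X1 Y1 y 0 = dist2 X2 Y2 y 0 ->
  X1 = X2 /\ Y1^2 = Y2^2.
Proof.
  unfold dist2; intros Hy H0 Hy0.
  assert (HX : X1 = X2).
  { apply (Rmult_eq_reg_l (2*y)); [lra | apply Rmult_integral_contrapositive; lra]. }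
  subst X2; split; [reflexivity | lra].
Qed.

(* The weights (lk, li, -1, lj) sum to 0 and, scaled by the radii, lie in the kernel
   of the Gram matrix; hence every row m gives the same value S of
   sum_n lambda_n |v_m v_n|^2, and contracting once more with the weights shows
   that the quadratic term Q equals S as well. *)
Lemma gram_kernel_dist2 p q r s a b c d e f lk li lj :
  p*lk - a*q*li + f*r - d*s*lj = 0 ->
  -a*p*lk + q*li + b*r - e*s*lj = 0 ->
  -f*p*lk - b*q*li - r - c*s*lj = 0 ->
  -d*p*lk - e*q*li + c*r + s*lj = 0 ->
  lk + li + lj = 1 ->
  let Q := lk*li*ivlen2 p q a + lk*lj*ivlen2 p s d + li*lj*ivlen2 q s e in
  li*ivlen2 p q a + lj*ivlen2 p s d - Q = ivlen2 p r f /\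
  lk*ivlen2 p q a + lj*ivlen2 q s e - Q = ivlen2 q r b /\
  lk*ivlen2 p s d + li*ivlen2 q s e - Q = ivlen2 r s c.
Proof.
  intros Rk Ri Rl Rj Hsum Q.
  assert (h : lk + li + lj - 1 = 0) by lra.
  set (S := lk*p^2 + li*q^2 + lj*s^2 - r^2).
  assert (Sk : li*ivlen2 p q a + lj*ivlen2 p s d - ivlen2 p r f = S).
  { unfold S, ivlen2.
    linear_combination (p^2*(lk + li + lj - 1) - 2*p*(p*lk - a*q*li + f*r - d*s*lj)). }
  assert (Si : lk*ivlen2 p q a + lj*ivlen2 q s e - ivlen2 q r b = S).
  { unfold S, ivlen2.
    linear_combination (q^2*(lk + li + lj - 1) - 2*q*(-a*p*lk + q*li + b*r - e*s*lj)). }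
  assert (Sj : lk*ivlen2 p s d + li*ivlen2 q s e - ivlen2 r s c = S).
  { unfold S, ivlen2.
    linear_combination (s^2*(lk + li + lj - 1) - 2*s*(-d*p*lk - e*q*li + c*r + s*lj)). }
  assert (Sl : lk*ivlen2 p r f + li*ivlen2 q r b + lj*ivlen2 r s c = S).
  { unfold S, ivlen2.
    linear_combination (r^2*(lk + li + lj - 1) - 2*r*(-f*p*lk - b*q*li - r - c*s*lj)). }
  assert (HQ : Q = S).
  { assert (E : 2*Q = lk * (li*ivlen2 p q a + lj*ivlen2 p s d - ivlen2 p r f)
                    + li * (lk*ivlen2 p q a + lj*ivlen2 q s e - ivlen2 q r b)
                    + lj * (lk*ivlen2 p s d + li*ivlen2 q s e - ivlen2 r s c)
                    + (lk*ivlen2 p r f + li*ivlen2 q r b + lj*ivlen2 r s c))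
      by (unfold Q, ivlen2; ring).
    rewrite Sk, Si, Sj, Sl in E.
    replace (lk*S + li*S + lj*S) with ((lk + li + lj)*S) in E by ring.
    rewrite Hsum in E; lra. }
  repeat split; lra.
Qed.

Lemma hinge_kl_dist2_of_kernel p q r s a b c d e f xk yk xl yl y lk li lj :
  0 < y -> 0 < yk -> 0 <= yl ->
  dist2 xk yk 0 0 = ivlen2 p q a -> dist2 xk yk y 0 = ivlen2 p s d ->
  dist2 0 0 xl (-yl) = ivlen2 q r b -> dist2 0 0 y 0 = ivlen2 q s e ->
  dist2 xl (-yl) y 0 = ivlen2 r s c ->
  p*lk - a*q*li + f*r - d*s*lj = 0 ->
  -a*p*lk + q*li + b*r - e*s*lj = 0 ->
  -f*p*lk - b*q*li - r - c*s*lj = 0 ->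
  -d*p*lk - e*q*li + c*r + s*lj = 0 ->
  lk + li + lj = 1 -> lk < 0 ->
  dist2 xk yk xl (-yl) = ivlen2 p r f.
Proof.
  intros Hy Hyk Hyl Dki Dkj Dil Dij Dlj Rk Ri Rl Rj Hsum Hlk.
  destruct (gram_kernel_dist2 p q r s a b c d e f lk li lj Rk Ri Rl Rj Hsum)
    as (Ekl & Eil & Elj).
  (* P = lk v_k + li v_i + lj v_j has the distances of v_l to v_i and v_j, so it is v_l
     or its mirror image in the axis; lk < 0 puts it on the side of v_l. *)
  set (X := lk*xk + li*0 + lj*y); set (Y := lk*yk + li*0 + lj*0).
  assert (D00 : forall x y, dist2 x y x y = 0) by (intros; unfold dist2; ring).
  assert (Pk := dist2_affine_comb lk li lj xk yk 0 0 y 0 xk yk Hsum).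
  assert (Pi := dist2_affine_comb lk li lj xk yk 0 0 y 0 0 0 Hsum).
  assert (Pj := dist2_affine_comb lk li lj xk yk 0 0 y 0 y 0 Hsum).
  rewrite (dist2C 0 0 xk yk), (dist2C y 0 xk yk), D00, Dki, Dkj, Dij in Pk.
  rewrite (dist2C y 0 0 0), D00, Dki, Dkj, Dij in Pi.
  rewrite D00, Dki, Dkj, Dij in Pj.
  fold X Y in Pk, Pi, Pj.
  destruct (dist2_axis_inj X Y xl (-yl) y ltac:(lra)) as [HX HY].
  - rewrite Pi, (dist2C xl), Dil, <- Eil; ring.
  - rewrite Pj, Dlj, <- Elj; ring.
  - assert (HY' : Y = -yl).
    { assert (Y < 0) by (unfold Y; nra). nra. }
    rewrite <- HX, <- HY', dist2C, Pk, <- Ekl; ring.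
Qed.

(* Together with [- Delta b c e] and [hinge_N a b c d e - (e^2 - 1) * F], these are
   the entries of the first column of the adjugate of the Gram matrix. *)
Definition gram_cof_i (F a b c d e : R) : R := d*e + b*c*d + a - a*c^2 + F*c*e + F*b.
Definition gram_cof_j (F a b c d e : R) : R := d - b^2*d + a*e + a*b*c + F*c + F*b*e.

Lemma hinge_gram_adj F a b c d e :
  let ck := - Defs.Delta b c e in let ci := gram_cof_i F a b c d e in
  let cl := hinge_N a b c d e - (e^2 - 1) * F in let cj := gram_cof_j F a b c d e in
  ck - a*ci - F*cl - d*cj = hinge_gram F a b c d e /\
  -a*ck + ci - b*cl - e*cj = 0 /\
  -F*ck - b*ci + cl - c*cj = 0 /\
  -d*ck - e*ci - c*cl + cj = 0.
Proof.
  unfold hinge_gram, hinge_N, gram_cof_i, gram_cof_j, det4, det3, Defs.Delta.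
  repeat split; ring.
Qed.

Lemma gram_cof_i_sqr F a b c d e :
  gram_cof_i F a b c d e ^2
  = Defs.Delta b c e * Defs.Delta c d F - hinge_gram F a b c d e * (1 - c^2).
Proof. unfold gram_cof_i, hinge_gram, det4, det3, Defs.Delta; ring. Qed.

Lemma gram_cof_j_sqr F a b c d e :
  gram_cof_j F a b c d e ^2
  = Defs.Delta b c e * Defs.Delta a b F - hinge_gram F a b c d e * (1 - b^2).
Proof. unfold gram_cof_j, hinge_gram, det4, det3, Defs.Delta; ring. Qed.

Lemma f_hinge_bounds p q r s a b c d e :
  1 < a -> 1 < b -> 1 < c -> 1 < d -> 1 < e ->
  let f := f_hinge p q r s a b c d e in 0 < f /\ a*c < f*e /\ b*d < f*e.
Proof.
  intros Ha Hb Hc Hd He f.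
  assert (Hgap := f_hinge_gap p q r s a b c d e He); fold f in Hgap.
  assert (0 < sqrt (Defs.Delta a d e) * sqrt (Defs.Delta b c e))
    by (apply Rmult_lt_0_compat; apply sqrt_lt_R0, Delta_gt0; lra).
  assert (0 < a*b /\ 0 < c*d) as [] by (split; nra).
  assert (0 < a*c*e /\ 0 < b*d*e) as [] by (split; apply Rmult_lt_0_compat; nra).
  unfold hinge_N in Hgap.
  assert (He2 : 0 < e^2 - 1) by nra.
  assert (Hf : 0 < f).
  { assert (0 < (e^2 - 1) * f) by lra. nra. }
  repeat split; [exact Hf | |]; apply (Rmult_lt_reg_r e); nra.
Qed.

Lemma sqrt_mult_of_sqr x A B : 0 < x -> 0 <= A -> 0 <= B -> x^2 = A * B ->
  x = sqrt A * sqrt B.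
Proof.
  intros Hx HA HB E; rewrite <- sqrt_mult, <- E by assumption.
  symmetry; apply sqrt_pow2; lra.
Qed.

Lemma gram_cofs_f_hinge p q r s a b c d e :
  1 < a -> 1 < b -> 1 < c -> 1 < d -> 1 < e ->
  let f := f_hinge p q r s a b c d e in
  gram_cof_i f a b c d e = sqrt (Defs.Delta b c e) * sqrt (Defs.Delta c d f) /\
  gram_cof_j f a b c d e = sqrt (Defs.Delta b c e) * sqrt (Defs.Delta a b f).
Proof.
  intros Ha Hb Hc Hd He f.
  assert (Hroot := hinge_gram_f_hinge p q r s a b c d e Ha Hb ltac:(lra) ltac:(lra) He).
  destruct (f_hinge_bounds p q r s a b c d e Ha Hb Hc Hd He) as (Hf & Hfac & Hfbd).
  fold f in Hroot, Hf, Hfac, Hfbd.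
  split; apply sqrt_mult_of_sqr; try (apply Rlt_le, Delta_gt0; lra).
  - unfold gram_cof_i. assert (0 < b*c*d) by (apply Rmult_lt_0_compat; nra). nra.
  - rewrite gram_cof_i_sqr, Hroot; ring.
  - unfold gram_cof_j. assert (0 < a*b*c) by (apply Rmult_lt_0_compat; nra). nra.
  - rewrite gram_cof_j_sqr, Hroot; ring.
Qed.

Lemma F_hinge_eq_f_hinge p q r s a b c d e :
  hinge_admissible p q r s a b c d e -> hinge_condition p q r s a b c d e ->
  F_hinge p q r s a b c d e = f_hinge p q r s a b c d e.
Proof.
  intros Hadm Hcond.
  destruct (hinge_development p q r s a b c d e Hadm)
    as (xk & yk & xl & yl & y & Hy & Hyk & Hyl & Dki & Dkl & Dkj & Dil & Dij & Dlj).
  destruct Hadm as (Hp & Hq & Hr & Hs & Ha & Hb & Hc & Hd & He & _).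
  unfold hinge_condition in Hcond; cbv zeta in Hcond.
  assert (Hgap := f_hinge_gap p q r s a b c d e He).
  assert (Hroot := hinge_gram_f_hinge p q r s a b c d e Ha Hb ltac:(lra) ltac:(lra) He).
  destruct (gram_cofs_f_hinge p q r s a b c d e Ha Hb Hc Hd He) as [Ci Cj].
  set (f := f_hinge p q r s a b c d e) in *.
  destruct (hinge_gram_adj f a b c d e) as (Ak & Ai & Al & Aj); cbv zeta in Ak, Ai, Al, Aj.
  assert (Ck : Defs.Delta b c e = sqrt (Defs.Delta b c e) * sqrt (Defs.Delta b c e))
    by (rewrite sqrt_sqrt; [| apply Rlt_le, Delta_gt0]; lra).
  set (S1 := sqrt (Defs.Delta a d e)) in *; set (S2 := sqrt (Defs.Delta b c e)) in *.
  set (T1 := sqrt (Defs.Delta c d f)) in *; set (T2 := sqrt (Defs.Delta a b f)) in *.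
  assert (0 < S1 /\ 0 < S2) as [] by (split; apply sqrt_lt_R0, Delta_gt0; lra).
  assert (HS : 0 < S1 * S2) by nra.
  (* The adjugate column, scaled so that the weight of v_l is -1; the critical
     condition says exactly that the remaining weights sum to 1. *)
  set (k := r / (S1*S2)).
  assert (Hk : 0 < k) by (apply Rdiv_lt_0_compat; lra).
  assert (Hrk : r = - (k * (hinge_N a b c d e - (e^2 - 1) * f))).
  { replace (hinge_N a b c d e - (e^2 - 1) * f) with (- (S1*S2)) by lra.
    unfold k; field; lra. }
  set (lk := k * - Defs.Delta b c e / p); set (li := k * gram_cof_i f a b c d e / q);
  set (lj := k * gram_cof_j f a b c d e / s).
  apply (ivlen2_inj p r); try lra.
  rewrite <- Dkl.
  apply (hinge_kl_dist2_of_kernel p q r s a b c d e f xk yk xl yl y lk li lj);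
    try assumption; try lra.
  - rewrite Hrk; unfold lk, li, lj.
    transitivity (k * hinge_gram f a b c d e); [rewrite <- Ak; field; lra | rewrite Hroot; ring].
  - rewrite Hrk; unfold lk, li, lj.
    transitivity (k * 0); [rewrite <- Ai at 1; field; lra | ring].
  - rewrite Hrk; unfold lk, li, lj.
    transitivity (k * 0); [rewrite <- Al at 1; field; lra | ring].
  - rewrite Hrk; unfold lk, li, lj.
    transitivity (k * 0); [rewrite <- Aj at 1; field; lra | ring].
  - unfold lk, li, lj, k; rewrite Ci, Cj, Ck.
    transitivity (r / S1 * (T1/q + T2/s - S2/p)); [field; repeat split; lra|].
    rewrite <- Hcond; field; lra.
  - unfold lk; rewrite Ck.
    assert (0 < k * (S2*S2) / p) by (apply Rdiv_lt_0_compat; [apply Rmult_lt_0_compat; nra | lra]).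
    replace (k * - (S2 * S2) / p) with (- (k * (S2*S2) / p)) by (field; lra); lra.
Qed.

Lemma ex_derive_ivlen_line r1 r2 I h1 h2 hI : 0 < r1 -> 0 < r2 -> 0 <= I ->
  ex_derive (fun t => ivlen (r1 + t*h1) (r2 + t*h2) (I + t*hI)) 0.
Proof.
  intros H1 H2 HI; unfold ivlen; auto_derive.
  rewrite !Rmult_0_l, !Rplus_0_r; exact (ivlen2_gt0 r1 r2 I H1 H2 HI).
Qed.

Lemma locally_lt (f g : R -> R) x : ex_derive f x -> ex_derive g x -> f x < g x ->
  locally x (fun t => f t < g t).
Proof.
  intros Hf Hg Hx.
  assert (Hc : ex_derive (fun t => g t - f t) x) by (auto_derive; auto).
  apply ex_derive_continuous in Hc.
  apply (filter_imp (fun t => 0 < g t - f t)); [intros; lra|].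
  assert (Hx' : 0 < g x - f x) by lra.
  apply (Hc (fun y => 0 < y)); exists (mkposreal _ Hx'); intros y Hy.
  apply Rabs_def2 in Hy; unfold minus, plus, opp in Hy; simpl in Hy; lra.
Qed.

Lemma is_derive_local_max (g : R -> R) x l :
  locally x (fun t => g t <= g x) -> is_derive g x l -> l = 0.
Proof.
  intros [eps Heps] Hd; apply is_derive_Reals in Hd.
  assert (pr : derivable_pt g x) by (exists l; exact Hd).
  rewrite <- (derive_pt_eq_0 g x l pr Hd).
  apply (deriv_maximum g (x - eps) (x + eps) x pr); try (destruct eps; simpl; lra).
  intros t H1 H2; apply Heps.
  apply Rabs_def1; unfold minus, plus, opp; simpl; lra.
Qed.

Section Line.

Variables p q r s a b c d e hp hq hr hs ha hb hc hd he : R.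

Definition along {T : Type} (G : R -> R -> R -> R -> R -> R -> R -> R -> R -> T) (t : R) : T :=
  G (p + t*hp) (q + t*hq) (r + t*hr) (s + t*hs)
    (a + t*ha) (b + t*hb) (c + t*hc) (d + t*hd) (e + t*he).

Lemma along_0 {T : Type} (G : R -> R -> R -> R -> R -> R -> R -> R -> R -> T) :
  along G 0 = G p q r s a b c d e.
Proof. unfold along; rewrite !Rmult_0_l, !Rplus_0_r; reflexivity. Qed.

Hypothesis Hadm : hinge_admissible p q r s a b c d e.

Lemma locally_along_admissible : locally 0 (along hinge_admissible).
Proof.
  unfold along, hinge_admissible, len_u, len_v, len_w, len_x, len_y in *; cbv zeta in *.
  destruct Hadm as (Hp & Hq & Hr & Hs & Ha & Hb & Hc & Hd & He & T1 & T2 & T3 & T4 & T5 & T6).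
  repeat apply filter_and;
    lazymatch goal with |- locally 0 (fun t => @?A t < @?B t) => apply (locally_lt A B) end;
    rewrite ?Rmult_0_l, ?Rplus_0_r; try assumption;
    unfold ivlen; auto_derive; rewrite ?Rmult_0_l, ?Rplus_0_r; repeat split;
    apply ivlen2_gt0; lra.
Qed.

Lemma ex_derive_along_F : ex_derive (along F_hinge) 0.
Proof.
  destruct (hinge_admissible_apex _ _ _ _ _ _ _ _ _ Hadm) as (Hy & Hk & Hl).
  destruct Hadm as (Hp & Hq & Hr & Hs & Ha & Hb & Hc & Hd & He & _).
  apply (ex_derive_ext (fun t =>
    let u := along len_u t in let v := along len_v t in let w := along len_w t in
    let x := along len_x t in let y := along len_y t in
    (dist2 (foot u x y) (sqrt (u^2 - foot u x y ^2))
           (foot v w y) (- sqrt (v^2 - foot v w y ^2)) - (p + t*hp)^2 - (r + t*hr)^2)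
    / (2*(p + t*hp)*(r + t*hr)))).
  { intro t; symmetry; exact (F_hinge_apex _ _ _ _ _ _ _ _ _). }
  cbv zeta; unfold dist2, foot; auto_derive; rewrite ?along_0, ?Rmult_0_l, ?Rplus_0_r;
    repeat split; try (apply ex_derive_ivlen_line; lra); try exact Hk; try exact Hl;
    repeat apply Rmult_integral_contrapositive_currified; lra.
Qed.

Lemma ex_derive_along_f : ex_derive (along f_hinge) 0.
Proof.
  destruct Hadm as (Hp & Hq & Hr & Hs & Ha & Hb & Hc & Hd & He & _).
  assert (D1 := Delta_gt0 a d e Ha ltac:(lra) ltac:(lra)).
  assert (D2 := Delta_gt0 b c e Hb ltac:(lra) ltac:(lra)).
  unfold along, f_hinge, Defs.Delta in *; auto_derive; rewrite ?Rmult_0_l, ?Rplus_0_r.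
  repeat split; [exact D1 | exact D2 | nra].
Qed.

Hypothesis Hcond : hinge_condition p q r s a b c d e.

Lemma Derive_along_F_hinge : Derive (along F_hinge) 0 = Derive (along f_hinge) 0.
Proof.
  assert (HFf := F_hinge_eq_f_hinge p q r s a b c d e Hadm Hcond).
  assert (Hloc := locally_along_admissible).
  assert (dF := ex_derive_along_F); assert (df := ex_derive_along_f).
  destruct Hadm as (Hp & Hq & Hr & Hs & Ha & Hb & Hc & Hd & He & _).
  set (Fl := along F_hinge) in *; set (fl := along f_hinge) in *.
  set (g := fun t => hinge_gram (Fl t) (a + t*ha) (b + t*hb) (c + t*hc) (d + t*hd) (e + t*he)).
  set (K := fun t => ((e + t*he)^2 - 1) * (Fl t + fl t)
                     - 2 * hinge_N (a + t*ha) (b + t*hb) (c + t*hc) (d + t*hd) (e + t*he)).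
  assert (H0 : Fl 0 = fl 0) by (unfold Fl, fl; rewrite !along_0; exact HFf).
  assert (Hg0 : g 0 = 0).
  { unfold g; rewrite !Rmult_0_l, !Rplus_0_r; unfold Fl; rewrite along_0, HFf.
    apply hinge_gram_f_hinge; lra. }
  assert (Hmax : locally 0 (fun t => g t <= g 0)).
  { rewrite Hg0; apply (filter_imp (along hinge_admissible)); [|exact Hloc].
    intros t Ht; exact (hinge_gram_F_hinge_le0 _ _ _ _ _ _ _ _ _ Ht). }
  assert (Hfact : locally 0 (fun t => (Fl t - fl t) * K t = g t)).
  { apply (filter_imp (along hinge_admissible)); [|exact Hloc].
    intros t (_ & _ & _ & _ & Hat & Hbt & Hct & Hdt & Het & _).
    unfold g, K, Fl, fl, along; rewrite <- hinge_gram_sub, hinge_gram_f_hinge; lra. }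
  assert (HK0 : 0 < K 0).
  { unfold K; rewrite !Rmult_0_l, !Rplus_0_r, H0.
    replace ((e^2 - 1) * (fl 0 + fl 0) - 2 * hinge_N a b c d e)
      with (2 * ((e^2 - 1) * fl 0 - hinge_N a b c d e)) by ring.
    unfold fl; rewrite along_0, f_hinge_gap by lra.
    assert (0 < Defs.Delta a d e /\ 0 < Defs.Delta b c e) as [] by (split; apply Delta_gt0; lra).
    assert (0 < sqrt (Defs.Delta a d e) * sqrt (Defs.Delta b c e))
      by (apply Rmult_lt_0_compat; apply sqrt_lt_R0; lra).
    lra. }
  assert (Hder : is_derive (fun t => (Fl t - fl t) * K t) 0 ((Derive Fl 0 - Derive fl 0) * K 0)).
  { unfold K, hinge_N; auto_derive; [repeat split; assumption |].
    change (fun x => Fl x) with Fl; change (fun x => fl x) with fl; rewrite H0; ring. }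
  apply (is_derive_ext_loc _ _ _ _ Hfact), (is_derive_local_max _ _ _ Hmax) in Hder.
  apply Rmult_integral in Hder; destruct Hder; lra.
Qed.

End Line.

Theorem lemma5p4 (p q r s a b c d e : R) :
  hinge_admissible p q r s a b c d e ->
  hinge_condition p q r s a b c d e ->
  forall hp hq hr hs ha hb hc hd he : R,
    exists l : R,
      is_derive (fun t => F_hinge (p + t*hp) (q + t*hq) (r + t*hr) (s + t*hs)
                          (a + t*ha) (b + t*hb) (c + t*hc) (d + t*hd) (e + t*he)) 0 l /\
      is_derive (fun t => f_hinge (p + t*hp) (q + t*hq) (r + t*hr) (s + t*hs)
                          (a + t*ha) (b + t*hb) (c + t*hc) (d + t*hd) (e + t*he)) 0 l.
Proof.
  intros Hadm Hcond hp hq hr hs ha hb hc hd he.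
  exists (Derive (along p q r s a b c d e hp hq hr hs ha hb hc hd he f_hinge) 0); split.
  - rewrite <- (Derive_along_F_hinge p q r s a b c d e hp hq hr hs ha hb hc hd he Hadm Hcond).
    exact (Derive_correct _ _ (ex_derive_along_F p q r s a b c d e hp hq hr hs ha hb hc hd he Hadm)).
  - exact (Derive_correct _ _ (ex_derive_along_f p q r s a b c d e hp hq hr hs ha hb hc hd he Hadm)).
Qed.
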